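(* For every integer $k\ge 2$, $$F_v(J_{2k+1},J_{2k+1};2k+1)\le 5\,F_v(J_{k+1},J_{k+1};k+1).$$
   Context: All graphs are finite and simple. $J_n$ denotes the complete graph $K_n$ with one edge removed. ''A graph $F$ contains $H$'' means $F$ has a (not necessarily induced) subgraph isomorphic to $H$. $G\rightarrow(H_1,\dots,H_r)^v$ means: for every partition $V(G)=X_1\cup\dots\cup X_r$ there is $i$ such that the subgraph induced by $X_i$ contains $H_i$. $\mathcal{F}_v(H_1,\dots,H_r;k)$ is the set of $K_k$-free graphs $G$ with $G\rightarrow(H_1,\dots,H_r)^v$, and $F_v(H_1,\dots,H_r;k)$ is the minimum number of vertices of a graph in this set. *)

From mathcomp Require Import all_boot.
Set Implicit Arguments. Unset Strict Implicit. Unset Printing Implicit Defensive.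

Record graph := Graph {
  gsize : nat;
  gadj : rel 'I_gsize;
  gsym : symmetric gadj;
  girr : irreflexive gadj
}.

(* The subgraph of G induced by X contains H: there is an injective map from
   V(H) into X sending edges of H to edges of G (not necessarily induced). *)
Definition contains_in (G : graph) (X : {set 'I_(gsize G)}) (H : graph) : Prop :=
  exists f : 'I_(gsize H) -> 'I_(gsize G),
    [/\ injective f,
        (forall v, f v \in X) &
        (forall u v, gadj u v -> gadj (f u) (f v))].

Definition contains (G H : graph) : Prop := contains_in [set: 'I_(gsize G)] H.

Definition K_adj (n : nat) : rel 'I_n := fun i j => i != j.
Lemma K_sym n : symmetric (@K_adj n).
Proof. by move=> i j; rewrite /K_adj eq_sym. Qed.
Lemma K_irr n : irreflexive (@K_adj n).
Proof. by move=> i; rewrite /K_adj eqxx. Qed.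
Definition K (n : nat) : graph := Graph (@K_sym n) (@K_irr n).

(* J_n = K_n minus the edge {0,1}. *)
Definition J_adj (n : nat) : rel 'I_n :=
  fun i j => (i != j) &&
    ~~ (((val i == 0) && (val j == 1)) || ((val i == 1) && (val j == 0))).
Lemma J_sym n : symmetric (@J_adj n).
Proof. move=> i j; rewrite /J_adj eq_sym; by case: (val i == 0); case: (val i == 1); case: (val j == 0); case: (val j == 1). Qed.
Lemma J_irr n : irreflexive (@J_adj n).
Proof. by move=> i; rewrite /J_adj eqxx. Qed.
Definition J (n : nat) : graph := Graph (@J_sym n) (@J_irr n).

Definition Kfree (k : nat) (G : graph) : Prop := ~ contains G (K k).

(* G -> (H1, H2)^v : every 2-partition V(G) = X1 ∪ X2 (X2 = complement of X1)
   has X1 inducing a copy of H1 or X2 inducing a copy of H2. *)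
Definition varrows2 (G H1 H2 : graph) : Prop :=
  forall X : {set 'I_(gsize G)}, contains_in X H1 \/ contains_in (~: X) H2.

Definition in_Fv2 (H1 H2 : graph) (k : nat) (G : graph) : Prop :=
  Kfree k G /\ varrows2 G H1 H2.

Definition is_Fv2 (H1 H2 : graph) (k m : nat) : Prop :=
  (exists G, in_Fv2 H1 H2 k G /\ gsize G = m) /\
  (forall G, in_Fv2 H1 H2 k G -> m <= gsize G).

From mathcomp Require Import all_boot zify.
From Stdlib Require Import Classical.
Set Implicit Arguments. Unset Strict Implicit. Unset Printing Implicit Defensive.

(* The witness is the lexicographic product C5[G] of the 5-cycle with an
   extremal graph G for F_v(J_{k+1}, J_{k+1}; k+1): every vertex of C5 is
   blown up to a copy of G, and copies at adjacent vertices are completely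
   joined.  As C5 is triangle-free, a clique of C5[G] meets at most two
   adjacent copies, each in at most k vertices, so C5[G] has no K_{2k+1}.
   Given a 2-colouring of C5[G], each copy contains a J_{k+1} in one of the
   colours; as C5 is an odd cycle, two adjacent copies do so in the same
   colour, and J_{k+1} completely joined to K_k contains J_{2k+1}. *)

Section GraphOfRelation.

Variables (T : finType) (r : rel T) (r_sym : symmetric r) (r_irr : irreflexive r).

Definition graph_of_adj : rel 'I_#|T| := fun i j => r (enum_val i) (enum_val j).

Lemma graph_of_sym : symmetric graph_of_adj.
Proof. by move=> i j; rewrite /graph_of_adj r_sym. Qed.

Lemma graph_of_irr : irreflexive graph_of_adj.
Proof. by move=> i; rewrite /graph_of_adj r_irr. Qed.

Definition graph_of : graph := Graph graph_of_sym graph_of_irr.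

Lemma graph_of_contains_in (Y : {set T}) (X : {set 'I_(gsize graph_of)})
    (H : graph) (F : 'I_(gsize H) -> T) :
  (forall t, (enum_rank t \in X) = (t \in Y)) ->
  injective F -> (forall v, F v \in Y) -> (forall u v, gadj u v -> r (F u) (F v)) ->
  contains_in X H.
Proof.
move=> XY F_inj FY F_adj; exists (fun v => enum_rank (F v)); split.
- by move=> u v /enum_rank_inj /F_inj.
- by move=> v; rewrite XY.
- by move=> u v /F_adj; rewrite /= /graph_of_adj !enum_rankK.
Qed.

Lemma graph_of_contains (H : graph) : contains graph_of H ->
  exists F : 'I_(gsize H) -> T, injective F /\ (forall u v, gadj u v -> r (F u) (F v)).
Proof.
move=> [f [f_inj _ f_adj]]; exists (fun v => enum_val (f v)); split.
- by move=> u v /enum_val_inj /f_inj.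
- by move=> u v /f_adj.
Qed.

End GraphOfRelation.

Lemma contains_K_of_clique (G : graph) (T : finType) (A : {set T})
    (phi : T -> 'I_(gsize G)) n :
  n <= #|A| -> {in A &, forall x y, x != y -> gadj (phi x) (phi y)} -> contains G (K n).
Proof.
move=> n_le clA; pose e (i : 'I_n) := enum_val (widen_ord n_le i).
have eA i : e i \in A by apply: enum_valP.
have e_adj u v : u != v -> gadj (phi (e u)) (phi (e v)).
  move=> uv; apply: clA; rewrite ?eA //.
  by apply: contra uv => /eqP /enum_val_inj /(congr1 val) /= /val_inj ->.
exists (fun i => phi (e i)); split.
- move=> u v euv; apply/eqP; apply: contraT => uv.
  by have := e_adj u v uv; rewrite euv girr.
- by move=> v; rewrite in_setT.
- exact: e_adj.
Qed.

Section LexicographicProduct.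

Variables (T : finType) (r : rel T) (r_sym : symmetric r) (G : graph).

Definition lexprod_adj : rel (T * 'I_(gsize G)) :=
  fun p q => if p.1 == q.1 then gadj p.2 q.2 else r p.1 q.1.

Lemma lexprod_sym : symmetric lexprod_adj.
Proof.
move=> [a u] [b v]; rewrite /lexprod_adj /=.
by have [_|_] := eqVneq a b; [apply: gsym | apply: r_sym].
Qed.

Lemma lexprod_irr : irreflexive lexprod_adj.
Proof. by move=> [a u]; rewrite /lexprod_adj /= eqxx girr. Qed.

Definition lexprod : graph := graph_of lexprod_sym lexprod_irr.

Lemma card_lexprod : gsize lexprod = #|T| * gsize G.
Proof. by rewrite /= card_prod card_ord. Qed.

Definition block (W : {set T * 'I_(gsize G)}) (i : T) : {set 'I_(gsize G)} :=
  [set v | (i, v) \in W].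

Lemma lexprod_clique_in_block_le k n (F : 'I_n -> T * 'I_(gsize G))
    (B : {set 'I_n}) (c : T) :
  Kfree k.+1 G -> (forall u v, u != v -> lexprod_adj (F u) (F v)) ->
  (forall x, x \in B -> (F x).1 = c) -> #|B| <= k.
Proof.
move=> G_Kfree F_clique FB; rewrite leqNgt; apply/negP => k_lt; apply: G_Kfree.
apply: (contains_K_of_clique (phi := fun x => (F x).2) k_lt) => x y xB yB xy.
by have := F_clique x y xy; rewrite /lexprod_adj !FB // eqxx.
Qed.

Lemma lexprod_Kfree k : (forall a b c, r a b -> r b c -> r a c -> False) ->
  Kfree k.+1 G -> Kfree (2 * k).+1 lexprod.
Proof.
move=> r_triangle_free G_Kfree /graph_of_contains [F [F_inj F_adj]].
have F_clique u v : u != v -> lexprod_adj (F u) (F v) by move/F_adj.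
pose A := [set x | (F x).1 == (F ord0).1].
have A_le : #|A| <= k.
  apply: (lexprod_clique_in_block_le (c := (F ord0).1) G_Kfree F_clique).
  by move=> x /[!inE] /eqP.
have AC_le : #|~: A| <= k.
  have [->|[c cAC]] := set_0Vmem (~: A); first by rewrite cards0.
  apply: (lexprod_clique_in_block_le (c := (F c).1) G_Kfree F_clique) => x xAC.
  apply/eqP; apply: contraT => xc.
  have outside y : y \in ~: A -> y != ord0 /\ (F y).1 != (F ord0).1.
    by rewrite !inE => yA; split=> //; apply: contra yA => /eqP ->.
  have [c0 ac] := outside c cAC; have [x0 ax] := outside x xAC.
  have cx : c != x by apply: contra xc => /eqP ->.
  have := F_clique _ _ cx; have := F_clique _ _ c0; have := F_clique _ _ x0.
  rewrite /lexprod_adj (negbTE ax) (negbTE ac) eq_sym (negbTE xc).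
  by move=> rx0 rc0 rcx; case: (r_triangle_free _ _ _ rcx rx0 rc0).
by move: A_le AC_le; have := cardsC A; rewrite card_ord /=; lia.
Qed.

(* Vertices 0..k go to the J_{k+1} in block i, which holds the missing edge
   {0,1}; vertices k+1..2k go to vertices 1..k of the J_{k+1} in block j,
   which induce a K_k. *)
Lemma lexprod_join_J k (W : {set T * 'I_(gsize G)}) (i j : T) :
  r i j -> i != j ->
  contains_in (block W i) (J k.+1) -> contains_in (block W j) (J k.+1) ->
  exists F : 'I_(2 * k).+1 -> T * 'I_(gsize G),
    [/\ injective F, (forall v, F v \in W) &
        (forall u v, @J_adj (2 * k).+1 u v -> lexprod_adj (F u) (F v))].
Proof.
move=> rij ij [f [f_inj fW f_adj]] [g [g_inj gW g_adj]].
pose F (x : 'I_(2 * k).+1) :=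
  if x <= k then (i, f (inord x)) else (j, g (inord (x - k))).
have x_lt (x : 'I_(2 * k).+1) : x < (2 * k).+1 := ltn_ord x.
exists F; split.
- move=> u v; rewrite /F; have u_lt := x_lt u; have v_lt := x_lt v.
  case: (leqP u k) => uk; case: (leqP v k) => vk [].
  + by move=> /f_inj /(congr1 val) /=; rewrite !inordK // => /val_inj.
  + by move=> eij; rewrite eij eqxx in ij.
  + by move=> eji; rewrite eji eqxx in ij.
  + move=> /g_inj /(congr1 val) /=; rewrite !inordK; [|lia|lia].
    by move=> uv; apply: val_inj => /=; lia.
- move=> v; rewrite /F; case: leqP => _.
  + by have := fW (inord v); rewrite inE.
  + by have := gW (inord (v - k)); rewrite inE.
- move=> u v; rewrite /= /J_adj -val_eqE /= /F => uv.
  have u_lt := x_lt u; have v_lt := x_lt v.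
  case: (leqP u k) => uk; case: (leqP v k) => vk; rewrite /lexprod_adj /=.
  + by rewrite eqxx; apply: f_adj; rewrite /= /J_adj -val_eqE /= !inordK //; lia.
  + by rewrite (negbTE ij).
  + by rewrite eq_sym (negbTE ij) r_sym.
  + by rewrite eqxx; apply: g_adj; rewrite /= /J_adj -val_eqE /= !inordK; lia.
Qed.

Lemma lexprod_arrows k : irreflexive r ->
  (forall P : T -> Prop, exists i j, r i j /\ (P i <-> P j)) ->
  varrows2 G (J k.+1) (J k.+1) -> varrows2 lexprod (J (2 * k).+1) (J (2 * k).+1).
Proof.
move=> r_irr mono_edge G_arrows X.
pose Y : {set T * 'I_(gsize G)} := [set t | enum_rank t \in X].
have XY t : (enum_rank t \in X) = (t \in Y) by rewrite inE.
have XYC t : (enum_rank t \in ~: X) = (t \in ~: Y) by rewrite !inE.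
have blockC i : ~: block Y i = block (~: Y) i by apply/setP => v; rewrite !inE.
have [i [j [rij Yij]]] := mono_edge (fun i => contains_in (block Y i) (J k.+1)).
have ij : i != j by apply: contraTneq rij => ->; rewrite r_irr.
have [Yi|notYi] := classic (contains_in (block Y i) (J k.+1)).
  have [F [F_inj FW F_adj]] := lexprod_join_J rij ij Yi (proj1 Yij Yi).
  by left; apply: (graph_of_contains_in (r_irr := lexprod_irr) (H := J (2 * k).+1)
    XY F_inj FW F_adj).
have YC_of_notY l : ~ contains_in (block Y l) (J k.+1) ->
    contains_in (block (~: Y) l) (J k.+1).
  by rewrite -blockC => notYl; case: (G_arrows (block Y l)).
have [F [F_inj FW F_adj]] := lexprod_join_J rij ij (YC_of_notY _ notYi)
  (YC_of_notY _ (fun Yj => notYi (proj2 Yij Yj))).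
by right; apply: (graph_of_contains_in (r_irr := lexprod_irr) (H := J (2 * k).+1)
  XYC F_inj FW F_adj).
Qed.

End LexicographicProduct.

Definition C5_adj : rel 'I_5 := fun a b => (a.+1 %% 5 == b) || (b.+1 %% 5 == a).

Lemma C5_sym : symmetric C5_adj.
Proof. by move=> a b; rewrite /C5_adj orbC. Qed.

Lemma C5_irr : irreflexive C5_adj.
Proof. by case=> [[|[|[|[|[|?]]]]] ?]. Qed.

Lemma C5_triangle_free (a b c : 'I_5) : C5_adj a b -> C5_adj b c -> C5_adj a c -> False.
Proof.
by case: a => [[|[|[|[|[|?]]]]] ?]; case: b => [[|[|[|[|[|?]]]]] ?];
  case: c => [[|[|[|[|[|?]]]]] ?].
Qed.

Lemma C5_monochromatic_edge (P : 'I_5 -> Prop) :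
  exists i j, C5_adj i j /\ (P i <-> P j).
Proof.
apply: NNPP => no_mono_edge.
have split_edge i j : C5_adj i j -> ~ (P i <-> P j).
  by move=> ij Pij; apply: no_mono_edge; exists i, j.
pose v n (n_lt : n < 5) : 'I_5 := Ordinal n_lt.
have := split_edge (v 0 isT) (v 1 isT) isT; have := split_edge (v 1 isT) (v 2 isT) isT.
have := split_edge (v 2 isT) (v 3 isT) isT; have := split_edge (v 3 isT) (v 4 isT) isT.
have := split_edge (v 4 isT) (v 0 isT) isT.
have := classic (P (v 0 isT)); have := classic (P (v 1 isT)).
have := classic (P (v 2 isT)); have := classic (P (v 3 isT)).
have := classic (P (v 4 isT)).
tauto.
Qed.

Lemma is_Fv2_exists_le H1 H2 n m :
  (exists G, in_Fv2 H1 H2 n G /\ gsize G = m) -> exists a, is_Fv2 H1 H2 n a /\ a <= m.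
Proof.
elim/ltn_ind: m => m IHm Gm.
have [[G [G_in G_lt]]|no_smaller] :=
  classic (exists G, in_Fv2 H1 H2 n G /\ gsize G < m).
  have [a [Fa a_le]] := IHm _ G_lt (ex_intro _ G (conj G_in erefl)).
  by exists a; split=> //; apply: leq_trans a_le (ltnW G_lt).
exists m; split=> //; split=> // G G_in; rewrite leqNgt; apply/negP => G_lt.
by apply: no_smaller; exists G.
Qed.

Theorem mainTheorem3 (k : nat) (hk : 2 <= k) (b : nat) :
  is_Fv2 (J k.+1) (J k.+1) k.+1 b ->
  exists a, is_Fv2 (J (2 * k).+1) (J (2 * k).+1) (2 * k).+1 a /\ a <= 5 * b.
Proof.
move=> [[G [[G_Kfree G_arrows] <-]] _].
apply: is_Fv2_exists_le; exists (lexprod C5_sym G); split.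
  split; first exact: lexprod_Kfree C5_triangle_free G_Kfree.
  exact: lexprod_arrows C5_irr C5_monochromatic_edge G_arrows.
by rewrite card_lexprod card_ord.
Qed.
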